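(* Let $q$ be a prime power, $M\geq 2$ an integer, and let $f$ be a SCIM polynomial over $\mathbb{F}_{q^2}$ of odd degree $d\geq 1$. Let $C_f\in \mathrm{U}(d,\mathbb{F}_{q^2})$ be a matrix with characteristic polynomial $f$. If there exists $\alpha\in \mathrm{U}(d,\mathbb{F}_{q^2})$ with $\alpha^M=C_f$, then $f(x^M)$ has a SCIM factor of degree $d$.
   Context: For $a\in\mathbb{F}_{q^2}$ write $\bar a=a^q$, extended coefficientwise to matrices and polynomials. Let $\Lambda_n$ be the $n\times n$ matrix with $1$'s on the antidiagonal and $0$ elsewhere; the unitary group is $\mathrm{U}(n,\mathbb{F}_{q^2})=\{A\in \mathrm{GL}(n,\mathbb{F}_{q^2}) : A\Lambda_n\bar A^{t}=\Lambda_n\}$. For a monic polynomial $f$ of degree $d$ with $f(0)\neq 0$ define $\widetilde{f}(t)=\overline{f(0)}^{-1}t^d\bar f(t^{-1})$. A SCIM polynomial is a monic polynomial $f\in\mathbb{F}_{q^2}[t]$ with $f(0)\neq0$, irreducible over $\mathbb{F}_{q^2}$, with $\widetilde f=f$. *)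

From HB Require Import structures.
From mathcomp Require Import all_boot all_order all_algebra all_field.
Set Implicit Arguments. Unset Strict Implicit. Unset Printing Implicit Defensive.
Import GRing.Theory.
Local Open Scope ring_scope.

(* F plays the role of F_{q^2}; the conjugation is a |-> a^q. *)
Definition qconj (F : finFieldType) (q : nat) (a : F) : F := a ^+ q.

Definition antidiag (F : finFieldType) (n : nat) : 'M[F]_n :=
  \matrix_(i < n, j < n) (if (i + j == n.-1)%N then 1 else 0).

Definition unitary (F : finFieldType) (q n : nat) (A : 'M[F]_n) : Prop :=
  A \in unitmx /\
  A *m antidiag F n *m (map_mx (qconj q) A)^T = antidiag F n.

(* tilde f (t) = (bar f(0))^{-1} t^d bar f(t^{-1}), d = deg f *)
Definition ptilde (F : finFieldType) (q : nat) (f : {poly F}) : {poly F} :=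
  (qconj q (f`_0))^-1 *:
    \poly_(i < size f) qconj q (f`_((size f).-1 - i)).

Definition SCIM (F : finFieldType) (q : nat) (f : {poly F}) : Prop :=
  [/\ f \is monic, f`_0 != 0, irreducible_poly f & ptilde q f = f].

From HB Require Import structures.
From mathcomp Require Import all_boot all_order all_algebra all_field.
From mathcomp Require Import perm zify.
Set Implicit Arguments.
Unset Strict Implicit.
Unset Printing Implicit Defensive.
Import GRing.Theory.
Local Open Scope ring_scope.

(** Since alpha^M = Cf, Cayley-Hamilton gives f(alpha^M) = 0, so the minimal
    polynomial of alpha divides f(x^M).  For a nonconstant divisor g of f(x^M),
    a nonzero P of degree < deg f is coprime to the irreducible f, hence P(x^M)
    is coprime to f(x^M) and not divisible by g; so P |-> P(x^M) mod g is
    injective on polynomials of degree < deg f and deg g >= d.  Applied to the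
    divisors of the characteristic polynomial h of alpha, this makes h
    irreducible and a divisor of f(x^M).  Finally h is self-conjugate-reciprocal
    because alpha is unitary: writing c for a |-> a^q and L for the form, the
    relation A L (c A)^T = L gives (x - A) L (c A)^T = - L (1 - x c A)^T, and
    det (1 - x c A) is the reversal of the conjugate of h. *)

Definition pnat_Frobenius_aut {R : comNzSemiRingType} {q : nat}
    of [pchar R].-nat q := fun x : R => x ^+ q.

Section PnatFrobeniusAutomorphism.

Variables (R : comNzSemiRingType) (q : nat) (pcharRq : [pchar R].-nat q).

Lemma pnat_Frobenius_aut_is_nmod_morphism :
  nmod_morphism (pnat_Frobenius_aut pcharRq).
Proof.
have q_gt0 : (0 < q)%N by case/andP: pcharRq.
split=> [|x y]; rewrite /pnat_Frobenius_aut; first by rewrite expr0n gtn_eqF.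
exact: exprDn_pchar.
Qed.

Lemma pnat_Frobenius_aut_is_monoid_morphism :
  monoid_morphism (pnat_Frobenius_aut pcharRq).
Proof. by split=> [|x y]; rewrite /pnat_Frobenius_aut ?expr1n ?exprMn. Qed.

HB.instance Definition _ := GRing.isNmodMorphism.Build R R
  (pnat_Frobenius_aut pcharRq) pnat_Frobenius_aut_is_nmod_morphism.
HB.instance Definition _ := GRing.isMonoidMorphism.Build R R
  (pnat_Frobenius_aut pcharRq) pnat_Frobenius_aut_is_monoid_morphism.

End PnatFrobeniusAutomorphism.

Lemma card_pchar_nat (F : finFieldType) (p n m : nat) :
  prime p -> #|F| = (p ^ n)%N -> [pchar F].-nat (p ^ m)%N.
Proof.
by move=> p_pr cardF; rewrite pnatX pnatE // (card_finPcharP cardF p_pr).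
Qed.

Lemma horner_char_poly (R : comNzRingType) n (A : 'M[R]_n) (x : R) :
  (char_poly A).[x] = \det (x%:M - A).
Proof.
rewrite /char_poly -horner_evalE -det_map_mx; congr (\det _).
by apply/matrixP => i j; rewrite !mxE /= horner_evalE hornerD hornerN hornerC
  hornerMn hornerX.
Qed.

Lemma char_poly_rev (F : fieldType) n (A : 'M[F]_n) :
  \poly_(i < n.+1) (char_poly A)`_(n - i) = \det (1%:M - 'X *: map_mx polyC A).
Proof.
pose phi := @tofrac _ \o @polyC F.
pose y : {fraction {poly F}} := tofrac 'X.
have y_neq0 : y != 0 by rewrite tofrac_eq0 polyX_eq0.
apply/eqP; rewrite -tofrac_eq -det_map_mx; apply/eqP.
have -> : map_mx (@tofrac _) (1%:M - 'X *: map_mx polyC A) =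
          y *: (y^-1%:M - map_mx phi A).
  apply/matrixP => i j; rewrite !mxE /= rmorphB rmorphM /= rmorph_nat.
  by rewrite mulrBr mulrnAr mulfV.
rewrite detZ -horner_char_poly -map_char_poly.
rewrite (horner_coef_wide _ (n := n.+1)); last first.
  by rewrite size_map_poly size_char_poly.
rewrite mulr_sumr poly_def rmorph_sum /= (reindex_inj rev_ord_inj) /=.
apply: eq_bigr => i _; rewrite subSS subKn; last by rewrite -ltnS.
rewrite -mul_polyC tofracM tofracXn coef_map /= mulrCA; congr (_ * _).
by rewrite exprVn exprB ?unitfE // -ltnS.
Qed.

Lemma char_poly_reciprocal (F : fieldType) (c : {rmorphism F -> F}) n
    (A L : 'M[F]_n) :
  \det L != 0 -> A *m L *m (map_mx c A)^T = L ->
  \poly_(i < n.+1) c (char_poly A)`_(n - i) = c (char_poly A)`_0 *: char_poly A.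
Proof.
move=> detL_neq0 AL.
set h := char_poly A; set B := map_mx c A.
have revB : \poly_(i < n.+1) c h`_(n - i) = \det (1%:M - 'X *: map_mx polyC B).
  rewrite -char_poly_rev -map_char_poly; apply: eq_poly => i _.
  by rewrite coef_map.
set D := \det _ in revB.
have hB : c (\det A) *: h = (-1) ^+ n *: D.
  pose Lp := map_mx polyC L; pose Bp := map_mx polyC B.
  have ALp : map_mx polyC A *m Lp *m Bp^T = Lp by rewrite map_trmx -!map_mxM AL.
  have : char_poly_mx A *m Lp *m Bp^T = - Lp *m (1%:M - 'X *: Bp)^T.
    rewrite /char_poly_mx mulmxBl -scalar_mxC mulmxBl ALp.
    rewrite mul_mx_scalar -scalemxAl.
    rewrite linearB /= trmx1 linearZ /= mulmxBr mulmx1 -scalemxAr.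
    by rewrite mulNmx scalerN opprK addrC.
  move/(congr1 determinant); rewrite -scaleN1r !det_mulmx detZ !det_tr !det_map_mx.
  rewrite -[\det (char_poly_mx A)]/h -/D => e.
  rewrite -mul_polyC mulrC.
  apply: (@mulIf _ (\det L)%:P); first by rewrite polyC_eq0.
  by rewrite mulrAC e -mul_polyC rmorphXn rmorphN1 mulrAC.
rewrite revB char_poly_det rmorphM rmorphXn rmorphN1 -scalerA -/h hB.
by rewrite scalerA -exprD addnn -signr_odd odd_double scale1r.
Qed.

Lemma antidiag_perm_mx (F : finFieldType) n :
  antidiag F n = perm_mx (perm (@rev_ord_inj n)).
Proof.
apply/matrixP => i j; rewrite !mxE permE.
have -> : (i + j == n.-1)%N = (rev_ord i == j).
  by rewrite -val_eqE /=; apply/eqP/eqP; have := ltn_ord i; have := ltn_ord j; lia.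
by case: eqP.
Qed.

Lemma det_antidiag_neq0 (F : finFieldType) n : \det (antidiag F n) != 0.
Proof. by rewrite antidiag_perm_mx det_perm signr_eq0. Qed.

Lemma char_poly_coef0_unitmx (F : fieldType) n (A : 'M[F]_n) :
  A \in unitmx -> (char_poly A)`_0 != 0.
Proof. by rewrite char_poly_det mulf_eq0 signr_eq0 unitmxE unitfE. Qed.

Lemma unitary_ptilde_char_poly (F : finFieldType) q n (A : 'M[F]_n) :
  [pchar F].-nat q -> unitary q A -> ptilde q (char_poly A) = char_poly A.
Proof.
move=> pcharFq [A_unit AL].
have rec := char_poly_reciprocal (c := pnat_Frobenius_aut pcharFq)
  (det_antidiag_neq0 F n) AL.
have c0_neq0 : qconj q (char_poly A)`_0 != 0.
  by rewrite expf_neq0 // char_poly_coef0_unitmx.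
rewrite /ptilde size_char_poly /=.
transitivity ((qconj q (char_poly A)`_0)^-1 *:
              (qconj q (char_poly A)`_0 *: char_poly A)).
  by congr (_ *: _); exact: rec.
by rewrite scalerA mulVf ?scale1r.
Qed.

Lemma coprimep_comp (R : idomainType) (p q r : {poly R}) :
  coprimep p q -> coprimep (p \Po r) (q \Po r).
Proof.
case/Bezout_coprimepP => [[u v] /= uv_eqp1]; apply/Bezout_coprimepP.
exists (u \Po r, v \Po r); rewrite /= -!comp_polyM -comp_polyD.
set e := u * p + v * q in uv_eqp1 *.
have e_const : e = (e`_0)%:P.
  by apply: size1_polyC; rewrite (eqp_size uv_eqp1) size_poly1.
by rewrite e_const comp_polyC -e_const.
Qed.

Lemma size_dvdp_comp_irreducible (F : finFieldType) (f g r : {poly F}) :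
  irreducible_poly f -> g %| f \Po r -> (1 < size g)%N -> (size f <= size g)%N.
Proof.
move=> f_irr g_dvd g_gt1; have f_gt1 : (1 < size f)%N := f_irr.1.
have g_neq0 : g != 0 by rewrite -size_poly_gt0 ltnW.
have small_comp_dvdp :
    forall P : {poly F}, (size P < size f)%N -> g %| P \Po r -> P = 0.
  move=> P P_small gP; apply/eqP; apply: contraTT g_gt1 => P_neq0.
  have : coprimep (f \Po r) (P \Po r).
    apply: coprimep_comp; rewrite irreducible_poly_coprime //.
    by apply: contraTN P_small => /(dvdp_leq P_neq0); rewrite -leqNgt.
  by move/coprimepP/(_ g g_dvd gP); rewrite -size_poly_eq1 => /eqP ->.
pose n := (size f).-1; pose m := (size g).-1.
pose phi (u : 'rV[F]_n) : 'rV[F]_m := poly_rV ((rVpoly u \Po r) %% g).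
have phi_inj : injective phi.
  move=> u v /eqP; rewrite -subr_eq0 -linearB /= -modpN -modpD.
  rewrite -comp_polyB -linearB /=.
  set w := _ %% g => /eqP w0.
  have w_small : (size w <= m)%N by rewrite /m -ltnS prednK ?ltn_modp // ltnW.
  have : w = 0 by rewrite -(poly_rV_K w_small) w0 linear0.
  have uv_small : (size (rVpoly (u - v)) < size f)%N.
    by rewrite (leq_ltn_trans (size_poly _ _)) // ltn_predL ltnW.
  move=> /modp_eq0P /(small_comp_dvdp _ uv_small) /(congr1 (@poly_rV F n)).
  by rewrite rVpolyK linear0 => /eqP; rewrite subr_eq0 => /eqP.
have := leq_card phi phi_inj.
rewrite !card_mx !mul1n leq_exp2l ?card_finNzRing_gt1 //.
rewrite /n /m; lia.
Qed.

Lemma horner_mx_comp (R : comNzRingType) n (A : 'M[R]_n.+1) (p r : {poly R}) :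
  horner_mx A (p \Po r) = horner_mx (horner_mx A r) p.
Proof.
rewrite comp_polyE -[in RHS](coefK p) poly_def !linear_sum /=.
by apply: eq_bigr => i _; rewrite !linearZ /= !rmorphXn /= horner_mx_X.
Qed.

Lemma irreducible_char_poly_annihilator (F : fieldType) n (A : 'M[F]_n.+1)
    (P : {poly F}) :
  horner_mx A P = 0 ->
  (forall g, g %| P -> (1 < size g)%N -> (size (char_poly A) <= size g)%N) ->
  irreducible_poly (char_poly A) /\ char_poly A %| P.
Proof.
move=> AP size_dvdP.
have h_neq0 : char_poly A != 0 := monic_neq0 (char_poly_monic A).
have min_eqp : mxminpoly A %= char_poly A.
  rewrite -dvdp_size_eqp ?mxminpoly_dvd_char //.
  rewrite eqn_leq dvdp_leq ?mxminpoly_dvd_char //.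
  by rewrite size_dvdP ?mxminpoly_min // size_mxminpoly ltnS mxminpoly_nonconstant.
have h_dvdP : char_poly A %| P by rewrite -(eqp_dvdl _ min_eqp) mxminpoly_min.
split=> //; split=> [|g g_neq1 g_dvd]; first by rewrite size_char_poly.
have g_neq0 : g != 0.
  by apply: contraNneq h_neq0 => g0; move: g_dvd; rewrite g0 dvd0p.
rewrite -dvdp_size_eqp // eqn_leq dvdp_leq //= size_dvdP ?(dvdp_trans g_dvd) //.
by move: g_neq0 g_neq1; rewrite -size_poly_gt0; case: (size g) => [|[|]].
Qed.

Theorem lemma4p1 (F : finFieldType) (p k q : nat) (M d : nat)
  (f : {poly F}) (Cf : 'M[F]_d) :
  prime p -> (0 < k)%N -> q = (p ^ k)%N -> #|F| = (q ^ 2)%N ->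
  (2 <= M)%N ->
  SCIM q f -> (size f).-1 = d -> odd d ->
  unitary q Cf -> char_poly Cf = f ->
  (exists alpha : 'M[F]_d, unitary q alpha /\ alpha ^+ M = Cf) ->
  exists g : {poly F}, [/\ SCIM q g, (size g).-1 = d & g %| f \Po 'X^M].
Proof.
move=> p_pr _ -> cardF _ [_ _ f_irr _] size_f _ _ Cf_char [alpha [alpha_U alphaM]].
have pcharFq : [pchar F].-nat (p ^ k)%N.
  by apply: (@card_pchar_nat _ _ (k * 2)); rewrite // cardF expnM.
have f_gt1 : (1 < size f)%N := f_irr.1.
move: Cf alpha size_f Cf_char alpha_U alphaM; case: d => [|n]; first lia.
move=> Cf alpha size_f Cf_char alpha_U alphaM.
have alpha_ann : horner_mx alpha (f \Po 'X^M) = 0.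
  by rewrite horner_mx_comp rmorphXn /= horner_mx_X alphaM -Cf_char Cayley_Hamilton.
have size_h : size (char_poly alpha) = size f by rewrite size_char_poly; lia.
case: (irreducible_char_poly_annihilator alpha_ann) => [g g_dvd g_gt1|h_irr h_dvd].
  by rewrite size_h (size_dvdp_comp_irreducible f_irr g_dvd g_gt1).
exists (char_poly alpha); split; rewrite ?size_h //.
split=> //.
- exact: char_poly_monic.
- exact: char_poly_coef0_unitmx alpha_U.1.
- exact: unitary_ptilde_char_poly.
Qed.
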